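(* Let $\vec G$ be a finite loopless directed multigraph and $\mathfrak f$ a fraternal completion of $\vec G$ of depth $a$. Then for every arc $e$ of $\vec G$, $$\bigl|\{f\in E_{\mathfrak f}: f\succeq e\}\bigr|\le C(\mathfrak f),\qquad\text{where } C(\mathfrak f)=\sum_{\substack{(i_1,\dots,i_k)\\ k\ge 0,\ i_j\ge 1,\ \sum_j i_j< a}}\ \prod_{j=1}^k \Delta^-(\vec H_{i_j})$$ (the sum ranges over all finite sequences of positive integers with sum less than $a$, including the empty sequence, whose product is $1$).
   Context: Let $\vec G$ be a finite loopless directed multigraph and $a$ a positive integer. A fraternal completion of $\vec G$ of depth $a$ is a triple $\mathfrak f=((E_1,\dots,E_a),w,\kappa)$ such that: $E_1=E(\vec G)$; for $2\le i\le a$, $E_i$ is the arc set of a directed multigraph with vertex set $V(\vec G)$; the sets $E_1,\dots,E_a$ are pairwise disjoint (distinct arcs may have the same head and tail); writing $E_{\mathfrak f}=\bigcup_{1\le i\le a}E_i$, the weight $w(e)$ of $e\in E_{\mathfrak f}$ is the $i$ with $e\in E_i$; $\kappa$ maps each $e\in\bigcup_{1<i\le a}E_i$ to a pair $(f,g)\in E_{\mathfrak f}^2$ with ${\rm tail}(f)\ne{\rm tail}(g)$, $w(e)=w(f)+w(g)$, ${\rm tail}(e)={\rm tail}(f)$, ${\rm head}(e)={\rm tail}(g)$, ${\rm head}(f)={\rm head}(g)$; and conversely, for all $i,j$ with $i+j\le a$ and all $f\in E_i$, $g\in E_j$ with ${\rm tail}(f)\ne{\rm tail}(g)$ and ${\rm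 head}(f)={\rm head}(g)$, there is a unique $e\in E_{i+j}$ with $\kappa(e)\in\{(f,g),(g,f)\}$. Let $\prec$ be the partial order on $E_{\mathfrak f}$ obtained as the transitive closure of the relations $f\prec e$ and $g\prec e$ whenever $\kappa(e)=(f,g)$; $f\preceq e$ means $f\prec e$ or $f=e$. $\vec H_i$ denotes the directed multigraph $(V(\vec G),E_i)$ and $\Delta^-(\vec H_i)$ its maximum in-degree. *)

From mathcomp Require Import all_boot.
Set Implicit Arguments. Unset Strict Implicit. Unset Printing Implicit Defensive.

Definition loopless (V A : finType) (tlG hdG : A -> V) : Prop :=
  forall e : A, tlG e != hdG e.

(* A fraternal completion of depth a of G = (V, A, tlG, hdG) is encoded as:
   - a finType F of all arcs of E_f (the disjoint union E_1 u ... u E_a),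
   - tail/head maps tl hd : F -> V,
   - the weight w : F -> nat (w f = i iff f \in E_i),
   - kappa : F -> F * F (only meaningful on arcs of weight > 1),
   - emb : A -> F, a bijection of E(G) onto E_1 = {f | w f = 1} preserving
     tails and heads (this identifies E_1 with E(G)). *)
Definition is_fraternal_completion (V A F : finType) (tlG hdG : A -> V)
  (a : nat) (tl hd : F -> V) (w : F -> nat) (kappa : F -> F * F) (emb : A -> F)
  : Prop :=
      (forall f : F, 1 <= w f <= a) /\
      injective emb /\
      (forall f : F, w f = 1 <-> exists e : A, emb e = f) /\
      (forall e : A, tl (emb e) = tlG e /\ hd (emb e) = hdG e) /\
      (forall e : F, 1 < w e ->
         let f := (kappa e).1 in let g := (kappa e).2 in
         (tl f != tl g) /\ (w e = w f + w g) /\ (tl e = tl f) /\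
         (hd e = tl g) /\ (hd f = hd g)) /\
      (forall f g : F, w f + w g <= a -> tl f != tl g -> hd f = hd g ->
         exists! e : F, 1 < w e /\ (kappa e = (f, g) \/ kappa e = (g, f))).

Definition kchild (F : finType) (w : F -> nat) (kappa : F -> F * F) : rel F :=
  fun f e => (1 < w e) && ((f == (kappa e).1) || (f == (kappa e).2)).

(* f \preceq e  iff  connect (kchild w kappa) f e  (reflexive-transitive closure). *)

Definition maxindeg (V F : finType) (hd : F -> V) (w : F -> nat) (i : nat) : nat :=
  \max_(v : V) #|[set f : F | (w f == i) && (hd f == v)]|.

(* Such a sequence has length k < a and
   entries < a, so it is enumerated exactly once as a k-tuple of 'I_a, k < a. *)
Definition Cf (V F : finType) (hd : F -> V) (w : F -> nat) (a : nat) : nat :=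
  \sum_(k < a)
    \sum_(t : k.-tuple 'I_a |
            all (fun i : 'I_a => 0 < val i) t && (sumn (map val t) < a))
      \prod_(i <- t) maxindeg hd w (val i).

From mathcomp Require Import all_boot zify.
Set Implicit Arguments. Unset Strict Implicit. Unset Printing Implicit Defensive.

(* For an arc x of the completion write N(x) for the number of
   arcs f with x ⪯ f.  Every f ≻ x lies above some immediate successor
   ("parent") y of x, i.e. an arc with x ∈ κ(y); hence
       N(x) <= 1 + Σ_{y parent of x} N(y).
   The other component p(y) of κ(y) has head hd x and weight w y - w x, and
   by the uniqueness clause of the completion y is determined by p(y); so x
   has at most Δ^-(H_i) parents y with w(p(y)) = i.  Writing B(m) for the
   sum over compositions (i_1,...,i_k) with sum at most m of Π Δ^-(H_{i_j}),
   B satisfies B(m) = 1 + Σ_{0<i<=m} Δ^-(H_i) B(m-i), and induction on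
   a - w x gives N(x) <= B(a - w x). *)

Section Compositions.
Variables (a : nat) (M : nat -> nat).

Definition comp_sum (k m : nat) : nat :=
  \sum_(t : k.-tuple 'I_a | all (fun i : 'I_a => 0 < val i) t && (sumn (map val t) <= m))
    \prod_(i <- t) M (val i).

Definition comp_sum_upto (K m : nat) : nat := \sum_(k < K) comp_sum k m.

Lemma comp_sum0 (m : nat) : comp_sum 0 m = 1.
Proof. by rewrite /comp_sum (big_pred1 [tuple]) ?big_nil // => t; rewrite tuple0. Qed.

(* Splitting off the first part i of a composition. *)
Lemma comp_sumS (k m : nat) :
  comp_sum k.+1 m = \sum_(i < a | 0 < i <= m) M i * comp_sum k (m - i).
Proof.
rewrite /comp_sum (reindex (fun p : 'I_a * k.-tuple 'I_a => [tuple of p.1 :: p.2])) /=;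
  last first.
  exists (fun t : k.+1.-tuple 'I_a => (thead t, [tuple of behead t])).
  - by case=> i t _ /=; congr pair; apply: val_inj.
  - by move=> t _; case/tupleP: t => i t; apply: val_inj.
under [RHS]eq_bigr do rewrite big_distrr /=.
rewrite pair_big_dep /=; apply: eq_big => [[i t] /=|[i t] _]; last by rewrite big_cons.
case: (0 < i); rewrite ?andbF //=; case: (all _ _); rewrite ?andbF //=.
by case: (leqP i m) => him /=; [rewrite leq_subRL | apply/negbTE; rewrite -ltnNge ltn_addr].
Qed.

Lemma comp_sum_uptoS (K m : nat) :
  comp_sum_upto K.+1 m = 1 + \sum_(i < a | 0 < i <= m) M i * comp_sum_upto K (m - i).
Proof.
rewrite /comp_sum_upto big_ord_recl comp_sum0; congr (1 + _).
under [RHS]eq_bigr do rewrite big_distrr /=.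
by rewrite exchange_big; apply: eq_bigr => k _; rewrite comp_sumS.
Qed.

End Compositions.

(* The reachability set of x is x together with the reachability sets of
   its immediate successors. *)
Lemma card_connect_rec (T : finType) (r : rel T) (x : T) :
  #|[set f | connect r x f]| <= 1 + \sum_(y | r x y) #|[set f | connect r y f]|.
Proof.
have sub : [set f | connect r x f] \subset x |: \bigcup_(y | r x y) [set f | connect r y f].
  apply/subsetP => f; rewrite inE => /connectP [[_ ->|y q] /=]; first by rewrite setU11.
  move=> /andP [rxy pq] ->; rewrite setU1r //; apply/bigcupP; exists y => //.
  by rewrite inE; apply/connectP; exists q.
apply: leq_trans (subset_leq_card sub) _; rewrite cardsU1 leq_add ?leq_b1 //.
elim/big_rec2: _ => [|y X s _ IH]; first by rewrite cards0.
by rewrite (leq_trans (leq_card_setU _ _)) // leq_add2l.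
Qed.

Lemma sum_by_value (T : finType) (P : pred T) (f : T -> nat) (g : nat -> nat)
    (n : nat) (Q : pred nat) :
  (forall y, P y -> Q (f y) && (f y < n)) ->
  \sum_(y | P y) g (f y) = \sum_(i < n | Q i) #|[set y | P y & f y == i]| * g i.
Proof.
move=> Pf; under [RHS]eq_bigr do rewrite -sum1_card big_distrl /= mul1n.
rewrite (exchange_big_dep P) /= => [|i y _]; last by rewrite inE => /andP [].
apply: eq_bigr => y Py; have /andP [Qy ltyn] := Pf y Py.
rewrite (big_pred1 (Ordinal ltyn)) // => i; rewrite inE Py /=.
apply/andP/eqP => [[_ /eqP ei]|->]; [exact: val_inj | by []].
Qed.

Section FraternalCompletion.
Variables (V F : finType) (tl hd : F -> V) (w : F -> nat) (kappa : F -> F * F).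
Variable a : nat.

Hypothesis weight_range : forall f : F, 1 <= w f <= a.
Hypothesis kappa_spec : forall e : F, 1 < w e ->
  let f := (kappa e).1 in let g := (kappa e).2 in
  (tl f != tl g) /\ (w e = w f + w g) /\ (tl e = tl f) /\ (hd e = tl g) /\ (hd f = hd g).
Hypothesis kappa_unique : forall f g : F, w f + w g <= a -> tl f != tl g -> hd f = hd g ->
  exists! e : F, 1 < w e /\ (kappa e = (f, g) \/ kappa e = (g, f)).

Local Notation parent := (kchild w kappa).

Definition partner (x y : F) : F := if x == (kappa y).1 then (kappa y).2 else (kappa y).1.

Lemma parent_spec (x y : F) : parent x y ->
  [/\ 1 < w y, w y = w x + w (partner x y), hd (partner x y) = hd x,
      tl x != tl (partner x y) & (kappa y = (x, partner x y) \/ kappa y = (partner x y, x))].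
Proof.
rewrite /kchild /partner => /andP [wy].
move: (kappa_spec wy); case: (kappa y) => f g /= [tfg [wfg [_ [_ hfg]]]].
case: (eqVneq x f) => [->|_ /eqP ->] /=; first by split => //; left.
by split => //; [rewrite addnC | rewrite eq_sym | right].
Qed.

Lemma partner_inj (x : F) : {in parent x &, injective (partner x)}.
Proof.
move=> y1 y2 /parent_spec [g1 w1 h1 t1 k1] /parent_spec [g2 _ _ _ k2] same.
have wle : w x + w (partner x y1) <= a by rewrite -w1; case/andP: (weight_range y1).
have [e [_ U]] := kappa_unique wle t1 (esym h1).
by rewrite -(U y1 (conj g1 k1)); apply: U; rewrite same.
Qed.

(* Partners of weight i are arcs of H_i with head hd x, so x has at most
   Δ^-(H_i) parents whose partner has weight i. *)
Lemma card_parents_by_weight (x : F) (i : nat) :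
  #|[set y | parent x y & w (partner x y) == i]| <= maxindeg hd w i.
Proof.
set S := [set y | _ & _].
have injS : {in S &, injective (partner x)}.
  by move=> y1 y2; rewrite !inE => /andP [+ _] /andP [+ _]; apply: partner_inj.
rewrite -(card_in_imset injS).
rewrite /maxindeg; apply: (leq_trans _ (leq_bigmax (hd x))) => /=.
apply/subset_leq_card/subsetP => g /imsetP [y]; rewrite /S inE => /andP [/parent_spec [_ _ h _ _] wi] ->.
by rewrite inE wi h eqxx.
Qed.

Lemma card_above_bound (K : nat) (x : F) : a - w x < K ->
  #|[set f | connect parent x f]| <= comp_sum_upto a (maxindeg hd w) K (a - w x).
Proof.
elim: K x => [//|K IH] x ltK; set m := a - w x.
have wp y : parent x y -> (0 < w (partner x y) <= m) && (w (partner x y) < a).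
  move=> /parent_spec [_ wy _ _ _]; move: (weight_range x) (weight_range y).
  by move: (weight_range (partner x y)); rewrite /m; lia.
apply: leq_trans (card_connect_rec _ _) _; rewrite comp_sum_uptoS leq_add2l.
apply: (@leq_trans (\sum_(y | parent x y)
                      comp_sum_upto a (maxindeg hd w) K (m - w (partner x y)))).
  apply: leq_sum => y pxy; have [_ wy _ _ _] := parent_spec pxy.
  have -> : m - w (partner x y) = a - w y by rewrite wy subnDA.
  by apply: IH; move: (wp y pxy) ltK; rewrite /m wy; lia.
rewrite (@sum_by_value _ _ (fun y => w (partner x y))
           (fun i => comp_sum_upto a (maxindeg hd w) K (m - i)) a (fun i => 0 < i <= m) wp).
by apply: leq_sum => i _; rewrite leq_mul2r card_parents_by_weight orbT.
Qed.

End FraternalCompletion.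

Theorem mainTheorem10 (V A F : finType) (tlG hdG : A -> V) (a : nat)
  (tl hd : F -> V) (w : F -> nat) (kappa : F -> F * F) (emb : A -> F) :
  0 < a ->
  loopless tlG hdG ->
  is_fraternal_completion tlG hdG a tl hd w kappa emb ->
  forall e : A,
    #|[set f : F | connect (kchild w kappa) (emb e) f]| <= Cf hd w a.
Proof.
case: a => [//|n] _ _ [Hw [_ [Hemb [_ [Hk Hu]]]]] e.
have w1 : w (emb e) = 1 by apply/Hemb; exists e.
have Cf_eq : Cf hd w n.+1 = comp_sum_upto n.+1 (maxindeg hd w) n.+1 n.
  by apply: eq_bigr => k _; apply: eq_bigl => t; rewrite ltnS.
have := card_above_bound Hw Hk Hu (K := n.+1) (x := emb e).
by rewrite Cf_eq w1 subn1; apply.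
Qed.
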